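(* Let $\Delta\in\mathbb F^{m\times m}$ be a connection matrix with column/row partition $J_0,\dots,J_b$, and let $\Delta^0,\dots,\Delta^m$, $T^1,\dots,T^{m-1}$ be produced by the Incremental Sweeping Algorithm applied to $\Delta$. Then for $2\le r\le m$ and $k=1,\dots,b$, $$\Delta^r_{J_{k-1}J_k}=(T^{r-1}_{J_{k-1}J_{k-1}})^{-1}\,\Delta^{r-1}_{J_{k-1}J_k}\,T^{r-1}_{J_kJ_k},$$ and all entries of $\Delta^r$ outside $\bigcup_k J_{k-1}\times J_k$ are zero. Consequently, in passing from $\Delta^{r-1}$ to $\Delta^r$, the only columns modified (by adding multiples of other columns) are columns $j$ such that $(j-r+1,j)$ is a change-of-basis pivot of iteration $r-1$, and the only rows modified (by adding multiples of other rows) are rows $p$ such that $(j-r+1,p)$ is the primary pivot used for some change-of-basis pivot $(j-r+1,j)$ of iteration $r-1$.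
   Context: Throughout, $\mathbb F$ is a field and $m\ge1$. $A_{IJ}$ is the submatrix of $A$ with rows in $I$, columns in $J$. $U^{pq}$ is the $m\times m$ matrix whose only nonzero entry is a $1$ in position $(p,q)$. Superscripts on matrices are indices, not powers. A connection matrix (over $\mathbb F$) is a matrix $\Delta\in\mathbb F^{m\times m}$ together with a partition $\{1,\dots,m\}=J_0\sqcup\cdots\sqcup J_b$ (the column/row partition; the $J_k$ need not consist of consecutive integers) such that $\Delta$ is upper triangular, $\Delta\Delta=0$, and $\Delta_{ij}=0$ unless $i<j$ and $(i,j)\in\bigcup_{k=1}^bJ_{k-1}\times J_k$. For $1\le r\le m-1$ the $r$-th diagonal is $\{(j-r,j):r<j\le m\}$. Incremental Sweeping Algorithm (ISA) applied to a connection matrix $\Delta$: set $\Delta^0=\Delta^1=\Delta$. For $r=1,\dots,m-1$ in turn: (Markup) for every position $(j-r,j)$ on the $r$-th diagonal with $\Delta^r_{j-r,j}\ne0$ such that no position in column $j$ was marked as a primary pivot at an earlier iteration: if some position $(j-r,p)$ of row $j-r$ was marked as a primary pivot at an earlier iteration, mark $(j-r,j)$ as a change-of-basis pivot of iteration $r$; otherwise mark $(j-r,j)$ permanently as a primary pivot. (Update) Let $T^r=I-\sum \frac{\Delta^r_{j-r,j}}{\Delta^r_{j-r,p}}U^{pj}$, the sum running over all change-of-basis pivots $(j-r,j)$ of iteration $r$, where $(j-r,p)$ is the primary pivot position in row $j-r$ (the primary pivot used for $(j-r,j)$); set $\Delta^{r+1}=(T^r)^{-1}\Delta^rT^r$.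 *)

From HB Require Import structures.
From mathcomp Require Import all_boot all_order all_algebra.
Set Implicit Arguments. Unset Strict Implicit. Unset Printing Implicit Defensive.
Import Order.TTheory GRing.Theory.
Local Open Scope ring_scope.

(* Indices are 0-based: 'I_m = {0,...,m-1} stands for {1,...,m}.
   The partition J_0,...,J_b is encoded by part : 'I_m -> 'I_b.+1,
   J_k = [set i | part i == k]. *)

Section Defs.
Variables (F : fieldType) (m b : nat).

Definition block (part : 'I_m -> 'I_b.+1) (k : nat) : {set 'I_m} :=
  [set i | val (part i) == k].

Definition conn_adj (part : 'I_m -> 'I_b.+1) (i j : 'I_m) : bool :=
  (val (part i)).+1 == val (part j).

Definition is_partition (part : 'I_m -> 'I_b.+1) : Prop :=
  forall k : 'I_b.+1, exists i, part i = k.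

Definition is_connection_matrix (part : 'I_m -> 'I_b.+1) (D : 'M[F]_m) : Prop :=
  [/\ (forall i j : 'I_m, (j < i)%N -> D i j = 0),
      D *m D = 0 &
      (forall i j : 'I_m, D i j != 0 -> (i < j)%N && conn_adj part i j)].

(* Submatrix A_{IJ} (rows in I, columns in J, in increasing order). *)
Definition subm (A : 'M[F]_m) (I J : {set 'I_m}) : 'M[F]_(#|I|, #|J|) :=
  \matrix_(a, c) A (enum_val a) (enum_val c).

(* state at the start of iteration r: (Delta^r, set of primary pivots marked
   at iterations < r) *)
Definition isa_state := ('M[F]_m * {set 'I_m * 'I_m})%type.

Definition isa_cand (S : isa_state) (r : nat) (i j : 'I_m) : bool :=
  [&& (i + r == j)%N, S.1 i j != 0 & [forall x : 'I_m, (x, j) \notin S.2]].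

Definition isa_cob (S : isa_state) r i j : bool :=
  isa_cand S r i j && [exists p : 'I_m, (i, p) \in S.2].

Definition isa_newprim (S : isa_state) r i j : bool :=
  isa_cand S r i j && ~~ [exists p : 'I_m, (i, p) \in S.2].

Definition isa_pivot (S : isa_state) (i : 'I_m) : option 'I_m :=
  [pick p | (i, p) \in S.2].

Definition isa_T (S : isa_state) (r : nat) : 'M[F]_m :=
  1%:M - \sum_(i : 'I_m) \sum_(j : 'I_m | isa_cob S r i j)
           (if isa_pivot S i is Some p then (S.1 i j / S.1 i p) *: delta_mx p j
            else 0).

Definition isa_step (r : nat) (S : isa_state) : isa_state :=
  (invmx (isa_T S r) *m S.1 *m isa_T S r,
   S.2 :|: [set x | isa_newprim S r x.1 x.2]).

Variable D : 'M[F]_m.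

(* isa_st n = (Delta^n, primary pivots marked at iterations < n);
   Delta^0 = Delta^1 = D, Delta^{r+1} = step r (Delta^r) for r >= 1. *)
Fixpoint isa_st (n : nat) : isa_state :=
  match n with
  | 0 => (D, set0)
  | r.+1 => if r is 0 then (D, set0) else isa_step r (isa_st r)
  end.

Definition ISA_Delta (r : nat) : 'M[F]_m := (isa_st r).1.
Definition ISA_T (r : nat) : 'M[F]_m := isa_T (isa_st r) r.
Definition ISA_cob (r : nat) (i j : 'I_m) : bool := isa_cob (isa_st r) r i j.
Definition ISA_pivot (r : nat) (i : 'I_m) : option 'I_m := isa_pivot (isa_st r) i.

End Defs.

From HB Require Import structures.
From mathcomp Require Import all_boot all_order all_algebra.
Import GRing.Theory.
Set Implicit Arguments.
Unset Strict Implicit.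
Unset Printing Implicit Defensive.
Local Open Scope ring_scope.

(* Write T^r = 1 - N^r.  A nonzero entry N_{pj} comes from a change-of-basis
   pivot (i,j) whose primary pivot is (i,p).  Column j is not a primary-pivot
   column while every row index p of N is one, so N N = 0 and
   (T^r)^-1 = 1 + N.  Since Delta_{ip} and Delta_{ij} are both nonzero, p and j
   lie in the same block J_k, so 1 - N and 1 + N are block diagonal for the
   partition and conjugation acts blockwise; in particular the support of
   Delta stays inside the union of the J_{k-1} x J_k.  Finally p < j because
   (i,p) was marked at an earlier iteration, i.e. on a lower diagonal. *)

Section MatrixFacts.
Variable F : fieldType.

Lemma sum_neq0 (I : finType) (P : pred I) (f : I -> F) :
  \sum_(i | P i) f i != 0 -> exists i, P i && (f i != 0).
Proof.
move=> sum_nz; apply/existsP; apply: contraNT sum_nz => /existsPn f0.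
by rewrite big1 // => i Pi; move: (f0 i); rewrite Pi negbK => /eqP.
Qed.

Lemma mulf_neq0P (x y : F) : x * y != 0 -> x != 0 /\ y != 0.
Proof. by rewrite mulf_eq0 negb_or => /andP[]. Qed.

Lemma invmx_1B_sqr0 n (N : 'M[F]_n) : N *m N = 0 ->
  (1%:M - N) \in unitmx /\ invmx (1%:M - N) = 1%:M + N.
Proof.
move=> NN0.
have inv1B : (1%:M - N) *m (1%:M + N) = 1%:M.
  by rewrite mulmxDr mulmx1 mulmxBl mul1mx NN0 subr0 subrK.
have [unit1B _] := mulmx1_unit inv1B; split => //.
have := congr1 (mulmx (invmx (1%:M - N))) inv1B.
by rewrite mulmxA mulVmx // mul1mx mulmx1.
Qed.

Variables (m b : nat) (part : 'I_m -> 'I_b.+1).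

Definition part_diag (A : 'M[F]_m) := forall a c, A a c != 0 -> part a = part c.

Definition part_closed (I : {set 'I_m}) :=
  forall a c, part a = part c -> (a \in I) = (c \in I).

Lemma part_diag_1D (N : 'M[F]_m) : part_diag N -> part_diag (1%:M + N).
Proof.
move=> diagN a c; rewrite !mxE; case: (a =P c) => [-> //|_].
by rewrite add0r => /diagN.
Qed.

Lemma part_diag_1B (N : 'M[F]_m) : part_diag N -> part_diag (1%:M - N).
Proof. by move=> diagN; apply: part_diag_1D => a c; rewrite mxE oppr_eq0 => /diagN. Qed.

Lemma block_part_closed k : part_closed (block part k).
Proof. by move=> a c part_ac; rewrite !inE part_ac. Qed.

Lemma subm_mulmx (A B : 'M[F]_m) (I J K : {set 'I_m}) :
  (forall a x c, a \in I -> c \in J -> A a x * B x c != 0 -> x \in K) ->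
  subm (A *m B) I J = subm A I K *m subm B K J.
Proof.
move=> supp_AB; apply/matrixP => a c; rewrite !mxE.
rewrite (bigID (mem K)) /= [X in _ + X]big1 ?addr0; last first.
  by move=> x; apply: contraNeq; apply: supp_AB; apply: enum_valP.
by rewrite big_enum_val; apply: eq_bigr => x _; rewrite !mxE.
Qed.

Lemma subm_mulmx_diag (A B C : 'M[F]_m) (I J : {set 'I_m}) :
  part_diag A -> part_diag C -> part_closed I -> part_closed J ->
  subm (A *m B *m C) I J = subm A I I *m subm B I J *m subm C J J.
Proof.
move=> diagA diagC closedI closedJ.
rewrite (subm_mulmx (K := J)); last first.
  by move=> a x c _ cJ /mulf_neq0P[_ /diagC /closedJ ->].
by rewrite (subm_mulmx (K := I)) // => a x c aI _ /mulf_neq0P[/diagA /closedI <-].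
Qed.

Lemma subm1 (I : {set 'I_m}) : subm (1%:M : 'M[F]_m) I I = 1%:M.
Proof. by apply/matrixP => a c; rewrite !mxE (inj_eq enum_val_inj). Qed.

Lemma subm_1B (N : 'M[F]_m) I : subm (1%:M - N) I I = 1%:M - subm N I I.
Proof. by rewrite -subm1; apply/matrixP => a c; rewrite !mxE. Qed.

Lemma subm_1D (N : 'M[F]_m) I : subm (1%:M + N) I I = 1%:M + subm N I I.
Proof. by rewrite -subm1; apply/matrixP => a c; rewrite !mxE. Qed.

End MatrixFacts.

Section SweepStep.
Variables (F : fieldType) (m b : nat) (part : 'I_m -> 'I_b.+1).
Variables (S : isa_state F m) (r : nat).

Definition isa_N : 'M[F]_m :=
  \sum_(i : 'I_m) \sum_(j : 'I_m | isa_cob S r i j)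
    (if isa_pivot S i is Some p then (S.1 i j / S.1 i p) *: delta_mx p j else 0).

Lemma isa_TE : isa_T S r = 1%:M - isa_N.
Proof. by []. Qed.

Lemma isa_pivotP i p : isa_pivot S i = Some p -> (i, p) \in S.2.
Proof. by rewrite /isa_pivot; case: pickP => // q iq [<-]. Qed.

Lemma isa_N_neq0 a c : isa_N a c != 0 -> exists i,
  [/\ isa_cob S r i c, isa_pivot S i = Some a, S.1 i c != 0 & S.1 i a != 0].
Proof.
rewrite /isa_N summxE => /sum_neq0[i /= N_i]; exists i.
move: N_i; rewrite summxE => /sum_neq0[j /andP[cob_ij]].
case piv_i: (isa_pivot S i) => [p|]; last by rewrite mxE eqxx.
rewrite !mxE => /mulf_neq0P[coef_nz]; case: (a =P p) => [->|]; last by rewrite eqxx.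
case: (c =P j) => [->|]; last by rewrite andbF eqxx.
by move: coef_nz; rewrite mulf_eq0 negb_or invr_eq0 => /andP[].
Qed.

Lemma isa_N_mul0 a x c : isa_N a x * isa_N x c = 0.
Proof.
apply/eqP; apply: contraT.
move=> /mulf_neq0P[/isa_N_neq0[i [cob_ix _ _ _]] /isa_N_neq0[i' [_ /isa_pivotP piv _ _]]].
by move: cob_ix => /andP[/and3P[_ _ /forallP /(_ i')]]; rewrite piv.
Qed.

Lemma isa_N_sqr0 : isa_N *m isa_N = 0.
Proof. by apply/matrixP => a c; rewrite !mxE big1 // => x _; rewrite isa_N_mul0. Qed.

Lemma subm_isa_N_sqr0 (I : {set 'I_m}) : subm isa_N I I *m subm isa_N I I = 0.
Proof. by apply/matrixP => a c; rewrite !mxE big1 // => x _; rewrite !mxE isa_N_mul0. Qed.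

Lemma isa_step_conj :
  (isa_step r S).1 = (1%:M + isa_N) *m S.1 *m (1%:M - isa_N).
Proof. by rewrite /isa_step /= isa_TE; case: (invmx_1B_sqr0 isa_N_sqr0) => _ ->. Qed.

Hypothesis supp_S : forall i j, S.1 i j != 0 -> conn_adj part i j.

Lemma isa_N_diag : part_diag part isa_N.
Proof.
move=> a c /isa_N_neq0[i [_ _ /supp_S adj_ic /supp_S adj_ia]]; apply: val_inj.
by move: adj_ia adj_ic; rewrite /conn_adj => /eqP <- /eqP.
Qed.

Lemma isa_step_supp i j : (isa_step r S).1 i j != 0 -> conn_adj part i j.
Proof.
have diag1D := part_diag_1D isa_N_diag; have diag1B := part_diag_1B isa_N_diag.
rewrite /conn_adj isa_step_conj mxE => /sum_neq0[y /= /mulf_neq0P[+ /diag1B <-]].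
by rewrite mxE => /sum_neq0[x /= /mulf_neq0P[/diag1D -> /supp_S]].
Qed.

Lemma isa_step_subm (I J : {set 'I_m}) : part_closed part I -> part_closed part J ->
  subm (isa_T S r) I I \in unitmx /\
  subm (isa_step r S).1 I J =
    invmx (subm (isa_T S r) I I) *m subm S.1 I J *m subm (isa_T S r) J J.
Proof.
move=> closedI closedJ; rewrite !isa_TE !subm_1B.
have [unit1B ->] := invmx_1B_sqr0 (subm_isa_N_sqr0 I); split => //.
rewrite isa_step_conj (subm_mulmx_diag _ (part_diag_1D isa_N_diag)
  (part_diag_1B isa_N_diag) closedI closedJ).
by rewrite subm_1D subm_1B.
Qed.

Hypothesis pivots_S : forall x y, (x, y) \in S.2 -> (x < y < x + r)%N.

Lemma isa_N_lt a c : isa_N a c != 0 -> (a < c)%N.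
Proof.
move=> /isa_N_neq0[i [cob_ic /isa_pivotP /pivots_S /andP[_ a_lt] _ _]].
by move: cob_ic => /andP[/and3P[/eqP <- _ _] _].
Qed.

End SweepStep.

Lemma isa_st_invariant (F : fieldType) (m b : nat) (part : 'I_m -> 'I_b.+1)
    (D : 'M[F]_m) :
  (forall i j, D i j != 0 -> conn_adj part i j) ->
  forall n, (forall i j, (isa_st D n).1 i j != 0 -> conn_adj part i j) /\
            (forall x y, (x, y) \in (isa_st D n).2 -> (x < y < x + n)%N).
Proof.
move=> supp_D; elim=> [|[|n] [supp_S pivots_S]]; try by split=> // x y; rewrite inE.
split; first exact: isa_step_supp supp_S.
move=> x y; rewrite /= inE => /orP[/pivots_S /andP[-> /= y_lt] | ].
  by rewrite addnS ltnS ltnW.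
by rewrite inE /= => /andP[/and3P[/eqP <- _ _] _]; rewrite !addnS !ltnS leq_addr /=.
Qed.

Theorem mainTheorem5 (F : fieldType) (m b : nat) (part : 'I_m -> 'I_b.+1)
    (D : 'M[F]_m) :
  (0 < m)%N -> is_partition part -> is_connection_matrix part D ->
  forall r : nat, (2 <= r <= m)%N ->
  [/\ (forall k : nat, (1 <= k <= b)%N ->
         subm (ISA_T D r.-1) (block part k.-1) (block part k.-1) \in unitmx /\
         subm (ISA_Delta D r) (block part k.-1) (block part k) =
           invmx (subm (ISA_T D r.-1) (block part k.-1) (block part k.-1))
             *m subm (ISA_Delta D r.-1) (block part k.-1) (block part k)
             *m subm (ISA_T D r.-1) (block part k) (block part k)),
      (forall i j : 'I_m, ~~ conn_adj part i j -> ISA_Delta D r i j = 0) &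
      exists N N' : 'M[F]_m,
        [/\ ISA_Delta D r = (1%:M + N') *m ISA_Delta D r.-1 *m (1%:M + N),
            (forall a c : 'I_m, N a c != 0 ->
               a != c /\ exists i : 'I_m, ISA_cob D r.-1 i c) &
            (forall a c : 'I_m, N' a c != 0 ->
               a != c /\ exists i j : 'I_m,
                 ISA_cob D r.-1 i j /\ ISA_pivot D r.-1 i = Some a)]].
Proof.
move=> _ _ [_ _ suppD] [|[|s]] // /andP[_ _].
have supp_D i j : D i j != 0 -> conn_adj part i j by move/suppD/andP=> [].
have [supp_S pivots_S] := isa_st_invariant supp_D s.+1.
rewrite /ISA_Delta /ISA_T /ISA_cob /ISA_pivot -[s.+2.-1]/s.+1.
have -> : isa_st D s.+2 = isa_step s.+1 (isa_st D s.+1) by [].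
have N_neq a c (N_ac : isa_N (isa_st D s.+1) s.+1 a c != 0) : a != c.
  by rewrite neq_ltn (isa_N_lt pivots_S N_ac).
split.
- by move=> k _; apply: (isa_step_subm _ supp_S); exact: block_part_closed.
- by move=> i j; apply: contraNeq; exact: (isa_step_supp supp_S).
exists (- isa_N (isa_st D s.+1) s.+1), (isa_N (isa_st D s.+1) s.+1); split.
- by rewrite isa_step_conj.
- move=> a c; rewrite mxE oppr_eq0 => N_ac; split; first exact: N_neq.
  by have [i [cob_ic _ _ _]] := isa_N_neq0 N_ac; exists i.
- move=> a c N_ac; split; first exact: N_neq.
  by have [i [cob_ic piv_i _ _]] := isa_N_neq0 N_ac; exists i, c.
Qed.
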